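(* Let $n\ge1$, let $\Sigma$ be a finite alphabet and ${\it td}>0$ with $T=\lfloor n\cdot{\it td}\rfloor$ satisfying $n\le T\le n^2$. Consider a random automaton on $n$ states in which, for each symbol $a\in\Sigma$ independently, the set of $a$-labelled transitions is a uniformly random $T$-element subset of the $n^2$ possible pairs of states. Let $U(n,|\Sigma|,{\it td})$ be the probability that every state has at least one outgoing transition labelled by every symbol of $\Sigma$. Then $U(n,|\Sigma|,{\it td})=\big(\alpha(n,T)/\beta(n,T)\big)^{|\Sigma|}$, where $\beta(n,T)=\binom{n^2}{T}$ and $\alpha(n,T)=\sum_{m=n}^{n^2}\binom{m-n}{T-n}\sum_{i=0}^{n}(-1)^i\binom{n}{i}\binom{m-in-1}{n-1}$.
   Context: Binomial coefficient convention: $\binom{a}{b}=0$ whenever $a<b$ (including negative $a$). This is the Tabakov–Vardi random automaton model with $n$ states, alphabet $\Sigma$ and transition density ${\it td}$. *)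

From HB Require Import structures.
From mathcomp Require Import all_boot all_order all_algebra.
Set Implicit Arguments. Unset Strict Implicit. Unset Printing Implicit Defensive.
Import Order.TTheory GRing.Theory Num.Theory.

(* Binomial coefficient with integer top: binz a b = 0 whenever a < b,
   in particular whenever a is negative. *)
Definition binz (a : int) (b : nat) : int :=
  match a with Posz k => ('C(k, b))%:Z | Negz _ => 0%R end.

Definition TVspace (n : nat) (Sigma : finType) (T : nat) :
  {set {ffun Sigma -> {set 'I_n * 'I_n}}} :=
  [set f : {ffun Sigma -> {set 'I_n * 'I_n}} | [forall a, #|f a| == T]].

Definition complete_event (n : nat) (Sigma : finType) (T : nat) :
  {set {ffun Sigma -> {set 'I_n * 'I_n}}} :=
  [set f in TVspace n Sigma T |
     [forall a : Sigma, forall q : 'I_n, exists q' : 'I_n, (q, q') \in f a]].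

(* U(n, |Sigma|, td) for T = floor(n td): uniform probability. *)
Definition Uprob (n : nat) (Sigma : finType) (T : nat) : rat :=
  (#|complete_event n Sigma T|%:R / #|TVspace n Sigma T|%:R)%R.

Definition beta_nT (n T : nat) : nat := 'C(n ^ 2, T).

Definition alpha_nT (n T : nat) : int :=
  (\sum_(n <= m < (n ^ 2).+1)
     ('C(m - n, T - n))%:Z *
     \sum_(i < n.+1) (-1) ^+ i * ('C(n, i))%:Z *
        binz (m%:Z - (i * n)%:Z - 1) (n - 1))%R.

From HB Require Import structures.
From mathcomp Require Import all_boot all_order all_algebra.
From mathcomp Require Import ring zify.
Import Order.TTheory GRing.Theory Num.Theory.
Set Implicit Arguments. Unset Strict Implicit.
Local Open Scope ring_scope.

(* The symbols are independent, so U is the |Sigma|-th power of the probability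
   that a uniformly random T-subset of [n] x [n] is left-total.  Weighting a
   relation by the product over its rows of X^|successors| (and 0 for an empty
   row) shows that the number of left-total T-sets is the coefficient of X^T in
   ((1 + X)^n - 1)^n.  Now (1 + X)^n - 1 = X g(1 + X) with
   g = 1 + Y + ... + Y^(n-1) = (1 - Y^n)/(1 - Y), so this coefficient is
   sum_j [Y^j] g^n * C(j, T - n), and expanding (1 - Y^n)^n (1 - Y)^-n gives
   [Y^j] g^n = sum_i (-1)^i C(n, i) C(j - i n + n - 1, n - 1); the substitution
   m = j + n yields alpha(n, T). *)


Lemma card_ffun_forall (A B : finType) (P : pred B) :
  #|[set f : {ffun A -> B} | [forall a, P (f a)]]| = (#|[set b | P b]| ^ #|A|)%N.
Proof.
rewrite -card_ffun_on; apply: eq_card => f; rewrite inE.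
by apply/forallP/ffun_onP => P_f a; have := P_f a; rewrite inE.
Qed.

Section RelationGeneratingFunction.

Variables (R : comNzRingType) (I : finType).

Lemma sum_set_monomials :
  \sum_(B : {set I}) ('X^#|B| : {poly R}) = ('X + 1) ^+ #|I|.
Proof.
pose mkset := fun f : {ffun I -> bool} => [set i | f i].
rewrite (reindex mkset); last first.
  exists (fun B : {set I} => [ffun i => i \in B]) => f _.
    by apply/ffunP => i; rewrite ffunE inE.
  by apply/setP => i; rewrite !inE ffunE.
have mono_prod f : ('X^#|mkset f| : {poly R}) = \prod_i (if f i then 'X else 1).
  rewrite -big_mkcond /= prodr_const; congr (_ ^+ _).
  by apply: eq_card => i; rewrite inE.
under eq_bigr do rewrite mono_prod.
rewrite -(bigA_distr_bigA (fun i (b : bool) => if b then 'X else 1)).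
by rewrite big_bool prodr_const.
Qed.

Definition nz_monomial (B : {set I}) : {poly R} := if B == set0 then 0 else 'X^#|B|.

Lemma sum_nz_monomials : \sum_(B : {set I}) nz_monomial B = ('X + 1) ^+ #|I| - 1.
Proof.
rewrite -sum_set_monomials (bigD1 set0) //= [in RHS](bigD1 set0) //=.
rewrite /nz_monomial eqxx cards0 add0r addrC addrK.
by apply: eq_bigr => B /negbTE ->.
Qed.

Definition succ_set (S : {set I * I}) (i : I) : {set I} := [set j | (i, j) \in S].

Definition left_total (S : {set I * I}) : bool := [forall i, exists j, (i, j) \in S].

Definition row_weight (S : {set I * I}) : {poly R} :=
  \prod_i nz_monomial (succ_set S i).

Lemma sum_row_weights :
  \sum_(S : {set I * I}) row_weight S = (('X + 1) ^+ #|I| - 1) ^+ #|I|.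
Proof.
pose mkrel := fun f : {ffun I -> {set I}} => [set p : I * I | p.2 \in f p.1].
rewrite (reindex mkrel); last first.
  exists (fun S => [ffun i => succ_set S i]) => f _.
    by apply/ffunP => i; rewrite ffunE; apply/setP => j; rewrite !inE.
  by apply/setP => -[i j]; rewrite !inE ffunE inE.
have rows f : row_weight (mkrel f) = \prod_i nz_monomial (f i).
  by apply: eq_bigr => i _; congr nz_monomial; apply/setP => j; rewrite !inE.
under eq_bigr do rewrite rows.
by rewrite -(bigA_distr_bigA (fun i => nz_monomial)) sum_nz_monomials prodr_const.
Qed.

Lemma card_succ_sets (S : {set I * I}) : #|S| = (\sum_i #|succ_set S i|)%N.
Proof.
rewrite -sum1_card big_mkcond /=.
under [RHS]eq_bigr do rewrite -sum1_card big_mkcond /=.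
by rewrite pair_bigA; apply: eq_bigr => -[i j] _; rewrite inE.
Qed.

Lemma coef_row_weight (S : {set I * I}) k :
  (row_weight S)`_k = ((#|S| == k) && left_total S)%:R.
Proof.
have [total|] := boolP (left_total S).
  have mono i : nz_monomial (succ_set S i) = 'X^#|succ_set S i|.
    rewrite /nz_monomial; case: eqP => // empty.
    have /existsP [j Sij] := forallP total i.
    by have := in_set0 j; rewrite -empty inE Sij.
  rewrite /row_weight (eq_bigr _ (fun i _ => mono i)).
  rewrite -(big_morph _ (exprD 'X) (expr0 'X)) -card_succ_sets coefXn.
  by rewrite andbT eq_sym.
move/forallPn => [i /existsPn no_succ]; rewrite andbF /row_weight (bigD1 i) //=.
suff -> : nz_monomial (succ_set S i) = 0 by rewrite mul0r coef0.
rewrite /nz_monomial ifT //; apply/eqP/setP => j.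
by rewrite !inE (negbTE (no_succ j)).
Qed.

Lemma card_left_total_sets k :
  #|[set S : {set I * I} | (#|S| == k) && left_total S]|%:R
    = ((('X + 1) ^+ #|I| - 1) ^+ #|I| : {poly R})`_k.
Proof.
rewrite -sum_row_weights coef_sum -sum1_card natr_sum big_mkcond /=.
by apply: eq_bigr => S _; rewrite coef_row_weight inE; case: ifP.
Qed.

End RelationGeneratingFunction.

Section NegativeBinomialSeries.

Variable R : comNzRingType.

(* The truncation below degree [L] of the power series (1 - X)^-(r+1). *)
Definition nbin_poly (r L : nat) : {poly R} := \poly_(l < L) ('C(l + r, r))%:R.

Lemma nbin_polyS r L :
  nbin_poly r L.+1 = nbin_poly r L + ('C(L + r, r))%:R *: 'X^L.
Proof. by rewrite /nbin_poly !poly_def big_ord_recr. Qed.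

Lemma mul_1subX_nbin_poly0 L : (1 - 'X) * nbin_poly 0 L = 1 - 'X^L.
Proof.
elim: L => [|L IH]; first by rewrite /nbin_poly poly_def big_ord0 mulr0 subrr.
by rewrite nbin_polyS mulrDr IH addn0 bin0 exprS scale1r; ring.
Qed.

Lemma mul_1subX_nbin_polyS r L :
  (1 - 'X) * nbin_poly r.+1 L = nbin_poly r L - ('C(L + r, r.+1))%:R *: 'X^L.
Proof.
elim: L => [|L IH].
  by rewrite /nbin_poly !poly_def !big_ord0 mulr0 bin_small // scale0r subr0.
rewrite !nbin_polyS mulrDr IH addnS binS mulrnDr exprS -!mul_polyC; ring.
Qed.

Lemma nbin_poly_inverse r L : exists Q : {poly R},
  (1 - 'X) ^+ r.+1 * nbin_poly r L = 1 + 'X^L * Q.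
Proof.
elim: r => [|r [Q IH]].
  by exists (-1); rewrite expr1 mul_1subX_nbin_poly0; ring.
exists (Q - ('C(L + r, r.+1))%:R%:P * (1 - 'X) ^+ r.+1).
by rewrite exprSr -mulrA mul_1subX_nbin_polyS mulrBr IH -mul_polyC; ring.
Qed.

(* [nbin_poly 0 n] is the geometric sum, so its n-th power agrees with
   (1 - X^n)^n * nbin_poly (n - 1) (j + 1) below degree j + 1. *)
Lemma coef_geometric_exp n j : (0 < n)%N ->
  ((nbin_poly 0 n) ^+ n)`_j =
    \sum_(i < n.+1) (-1) ^+ i * (if (j < n * i)%N then 0
                                 else ('C(j - n * i + n.-1, n.-1))%:R) *+ 'C(n, i).
Proof.
move=> n_gt0; have [Q inv] := nbin_poly_inverse n.-1 j.+1.
rewrite prednK // in inv.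
have expand : (nbin_poly 0 n) ^+ n * (1 + 'X^(j.+1) * Q) =
              (1 - 'X^n) ^+ n * nbin_poly n.-1 j.+1.
  by rewrite -inv mulrA -exprMn [nbin_poly 0 n * _]mulrC mul_1subX_nbin_poly0.
have := congr1 (fun p : {poly R} => p`_j) expand.
rewrite mulrDr mulr1 coefD mulrCA coefXnM ltnSn addr0 => ->.
rewrite exprBn big_distrl coef_sum; apply: eq_bigr => i _.
rewrite expr1n mulr1 -exprM /= mulrnAl coefMn -mulrA.
have -> : ((-1) ^+ i : {poly R}) = ((-1) ^+ i)%:P by rewrite rmorphXn rmorphN1.
rewrite coefCM coefXnM; case: ltnP => // _.
by rewrite coef_poly ltnS leq_subr.
Qed.

Lemma coef_XaddC1_exp i k : (('X + 1) ^+ i : {poly R})`_k = ('C(i, k))%:R.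
Proof.
rewrite exprD1n (eq_bigr (fun j : 'I_i.+1 => ('C(i, j))%:R *: 'X^j)); last first.
  by move=> j _; rewrite scaler_nat.
rewrite coef_sumMXn (big_ord1_eq _ (fun j => ('C(i, j))%:R)).
by case: ltnP => // /bin_small ->.
Qed.

Lemma XaddC1_exp_sub1 n :
  ('X + 1) ^+ n - 1 = 'X * (nbin_poly 0 n \Po ('X + 1)) :> {poly R}.
Proof.
have := congr1 (comp_poly ('X + 1)) (mul_1subX_nbin_poly0 n).
rewrite /= comp_polyM !comp_polyB rmorphXn /= comp_polyX -polyC1 comp_polyC polyC1.
by rewrite -[_ - 1]opprB => <-; ring.
Qed.

Lemma coef_XaddC1_exp_sub1_exp n T : (0 < n)%N -> (n <= T)%N ->
  ((('X + 1) ^+ n - 1) ^+ n : {poly R})`_T =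
  \sum_(j < (n ^ 2).+1 - n) ((nbin_poly 0 n) ^+ n)`_j * ('C(j, T - n))%:R.
Proof.
move=> n_gt0 nT.
rewrite XaddC1_exp_sub1 exprMn -rmorphXn coefXnM ltnNge nT /= coef_comp_poly.
set p := nbin_poly 0 n ^+ n.
rewrite (eq_bigr (fun i : 'I_(size p) => p`_i * ('C(i, T - n))%:R)); last first.
  by move=> i _; rewrite coef_XaddC1_exp.
have size_p : (size p <= (n ^ 2).+1 - n)%N.
  apply: leq_trans (size_poly_exp_leq _ _) _.
  have le_deg : ((size (nbin_poly 0 n)).-1 <= n.-1)%N.
    by rewrite -!subn1 leq_sub2r // size_poly.
  have := leq_mul le_deg (leqnn n).
  have -> : (n.-1 * n = n ^ 2 - n)%N by rewrite -subn1 mulnBl mul1n mulnn.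
  have : (n <= n ^ 2)%N by rewrite -mulnn leq_pmulr.
  lia.
rewrite (big_ord_widen _ (fun i => p`_i * ('C(i, T - n))%:R) size_p) big_mkcond /=.
apply: eq_bigr => i _.
by case: ltnP => // /(nth_default 0) ->; rewrite mul0r.
Qed.

End NegativeBinomialSeries.

Lemma binz_shift n i j : (0 < n)%N ->
  binz ((j + n)%:Z - (i * n)%:Z - 1) (n - 1) =
  if (j < n * i)%N then 0 else ('C(j - n * i + n.-1, n.-1))%:Z.
Proof.
move=> n_gt0; rewrite subn1 mulnC; case: ltnP => le_ni_j.
  by case E: (_ - _ - 1) => [k|] //=; rewrite bin_small //; lia.
by have -> : (j + n)%:Z - (n * i)%:Z - 1 = (j - n * i + n.-1)%:Z by lia.
Qed.

Lemma alpha_nT_coef n T : (0 < n)%N -> (n <= T)%N ->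
  alpha_nT n T = ((('X + 1) ^+ n - 1) ^+ n : {poly int})`_T.
Proof.
move=> n_gt0 nT; rewrite coef_XaddC1_exp_sub1_exp // /alpha_nT.
rewrite -{1}(add0n n) big_addn big_mkord; apply: eq_bigr => j _.
rewrite addnK mulrC coef_geometric_exp // natz; congr (_ * _).
by apply: eq_bigr => i _; rewrite binz_shift // -mulr_natr !natz; ring.
Qed.

Lemma complete_eventE n (Sigma : finType) T :
  complete_event n Sigma T =
  [set f : {ffun Sigma -> {set 'I_n * 'I_n}} |
     [forall a, (#|f a| == T) && left_total (f a)]].
Proof.
apply/setP => f; rewrite !inE.
apply/andP/forallP => [[/forallP size_f /forallP total_f] a|complete_f].
  by rewrite size_f; apply: total_f.
by split; apply/forallP => a; case/andP: (complete_f a).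
Qed.

Theorem theorem9p1 (R : archiRealFieldType) (n : nat) (Sigma : finType)
  (td : R) (T : nat) :
  (1 <= n)%N -> (0 < td)%R ->
  Num.floor (n%:R * td)%R = Posz T ->
  (n <= T)%N -> (T <= n ^ 2)%N ->
  Uprob n Sigma T =
    (((alpha_nT n T)%:~R / (beta_nT n T)%:R) ^+ #|Sigma|)%R.
Proof.
move=> n_gt0 _ _ nT _.
have count_complete := @card_left_total_sets int 'I_n T.
rewrite card_ord -alpha_nT_coef // in count_complete.
rewrite /Uprob complete_eventE /TVspace.
rewrite (card_ffun_forall _
  (fun S : {set 'I_n * 'I_n} => (#|S| == T) && left_total S)).
rewrite (card_ffun_forall _ (fun S : {set 'I_n * 'I_n} => #|S| == T)) !natrX -expr_div_n.
by rewrite card_draws card_prod card_ord mulnn -count_complete natz.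
Qed.
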